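(* There is a graph that contains every locally finite graph as an induced subgraph but contains no subdivision of $K_{\aleph_0}$.
   Context: All graphs are simple and countable. A graph is locally finite if every vertex has finite degree. *)

From Stdlib Require Import List.
Import ListNotations.

Record graph := Graph {
  vert : Type;
  adj : vert -> vert -> Prop;
  adj_sym : forall x y, adj x y -> adj y x;
  adj_irrefl : forall x, ~ adj x x;
  vert_countable : exists f : vert -> nat, forall x y, f x = f y -> x = y
}.

Definition locally_finite (G : graph) : Prop :=
  forall x : vert G, exists l : list (vert G), forall y, adj G x y -> In y l.

Definition induced_subgraph_of (H G : graph) : Prop :=
  exists f : vert H -> vert G,
    (forall x y, f x = f y -> x = y) /\
    (forall x y, adj H x y <-> adj G (f x) (f y)).

Fixpoint walk (G : graph) (x : vert G) (l : list (vert G)) (y : vert G) : Prop :=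
  match l with
  | [] => adj G x y
  | z :: l' => adj G x z /\ walk G z l' y
  end.

(* G contains (as a subgraph) a subdivision of K_aleph0: infinitely many
   distinct branch vertices b i, and for every pair i < j a path from b i
   to b j with interior vertices P i j, the paths being internally
   disjoint and avoiding the branch vertices in their interiors. *)
Definition has_TK_aleph0 (G : graph) : Prop :=
  exists (b : nat -> vert G) (P : nat -> nat -> list (vert G)),
    (forall i j, b i = b j -> i = j) /\
    (forall i j, i < j ->
        walk G (b i) (P i j) (b j) /\
        NoDup (b i :: P i j ++ [b j]) /\
        (forall v k, In v (P i j) -> v <> b k)) /\
    (forall i j i' j' v, i < j -> i' < j' -> (i, j) <> (i', j') ->
        In v (P i j) -> ~ In v (P i' j')).

(* The graph Gtree is a tree of finite graphs.  Its nodes are finite stacks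
   [L_n; ...; L_0] of "layers", ordered as a rooted tree by the suffix order;
   a layer L carries a finite graph on {0, ..., width L - 1} and a set of
   edges to the layer below.  The vertices of Gtree are the pairs (s, a)
   with a a slot of the top layer of s; edges join slots of the same node
   along the top layer, or a slot of s to a slot of its parent node.

   Universality: a countable locally finite graph H has a height function
   h x = min_y (f y + d(y, x)) (f an injective coding) whose levels are
   finite and which changes by at most one along edges; encoding levels
   h x, ..., 0 as a stack of layers places x at a node of Gtree, and this
   map is an induced embedding.

   No subdivided K_aleph0: every walk in Gtree meets a common ancestor of the
   nodes of its endpoints.  Since the branch paths are disjoint, finitely
   many vertices cannot block all of them; this forces two branch vertices
   below distinct children of the node of b 0, whose connecting path must
   then pass through vertices that the choice of paths has excluded. *)

From Stdlib Require Import List Arith Lia Cantor Classical ClassicalEpsilon Wf_nat.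
Import ListNotations.

Definition injective {A B} (f : A -> B) : Prop := forall x y, f x = f y -> x = y.

Lemma to_nat_injective : injective to_nat.
Proof. intros p q E. rewrite <- (cancel_of_to p), <- (cancel_of_to q), E. reflexivity. Qed.

Arguments to_nat : simpl never.

Fixpoint code_list {A} (c : A -> nat) (l : list A) : nat :=
  match l with [] => 0 | x :: l' => S (to_nat (c x, code_list c l')) end.

Lemma code_list_injective {A} (c : A -> nat) : injective c -> injective (code_list c).
Proof.
  intros Hc l; induction l as [|x l IH]; intros [|y l'] E; simpl in E; try discriminate; auto.
  injection E as E. apply to_nat_injective in E. injection E as Exy Ell.
  rewrite (Hc _ _ Exy), (IH _ Ell). reflexivity.
Qed.

(* A layer describes a finite graph on {0, ..., width-1} ("inner" edges)
   together with edges from it to the previous layer ("down" edges). *)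
Record layer := Layer { width : nat; inner : list (nat * nat); down : list (nat * nat) }.

Definition node := list layer.
Definition vtx := (node * nat)%type.

Definition valid (u : vtx) : Prop :=
  match fst u with [] => False | L :: _ => snd u < width L end.

Definition step (u v : vtx) : Prop :=
  match fst u with
  | [] => False
  | L :: s => snd u < width L /\
     ((fst v = fst u /\ snd v < width L /\ In (snd u, snd v) (inner L))
      \/ (valid v /\ fst v = s /\ In (snd u, snd v) (down L)))
  end.

Definition adjT (u v : vtx) : Prop := u <> v /\ (step u v \/ step v u).

Lemma adjT_sym u v : adjT u v -> adjT v u.
Proof. intros [Hne [H | H]]; split; auto. Qed.

Lemma adjT_irrefl u : ~ adjT u u.
Proof. intros [Hne _]; auto. Qed.

Definition code_edges : list (nat * nat) -> nat := code_list to_nat.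

Definition code_layer (L : layer) : nat :=
  to_nat (width L, to_nat (code_edges (inner L), code_edges (down L))).

Definition code_vtx (u : vtx) : nat := to_nat (code_list code_layer (fst u), snd u).

Lemma code_vtx_injective : injective code_vtx.
Proof.
  assert (Hedges : injective code_edges) by exact (code_list_injective _ to_nat_injective).
  assert (Hlayer : injective code_layer).
  { intros [w i d] [w' i' d'] E. unfold code_layer in E; simpl in E.
    apply to_nat_injective in E. injection E as Ew E.
    apply to_nat_injective in E. injection E as Ei Ed.
    rewrite Ew, (Hedges _ _ Ei), (Hedges _ _ Ed). reflexivity. }
  intros [s a] [s' a'] E. unfold code_vtx in E; simpl in E.
  apply to_nat_injective in E. injection E as Es Ea.
  rewrite (code_list_injective _ Hlayer _ _ Es), Ea. reflexivity.
Qed.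

Definition Gtree : graph :=
  Graph vtx adjT adjT_sym adjT_irrefl (ex_intro _ code_vtx code_vtx_injective).

Definition ancestor {A} (s t : list A) : Prop := exists p, t = p ++ s.

Lemma ancestor_refl {A} (s : list A) : ancestor s s.
Proof. exists []; reflexivity. Qed.

Lemma ancestor_trans {A} (s t u : list A) : ancestor s t -> ancestor t u -> ancestor s u.
Proof. intros [p ->] [q ->]. exists (q ++ p). apply app_assoc. Qed.

Lemma ancestor_parent {A} (x : A) t : ancestor t (x :: t).
Proof. exists [x]; reflexivity. Qed.

Lemma ancestor_total {A} (s s' t : list A) :
  ancestor s t -> ancestor s' t -> ancestor s s' \/ ancestor s' s.
Proof.
  intros [p Hp] [q Hq]. rewrite Hp in Hq.
  destruct (app_eq_app _ _ _ _ Hq) as [l [[_ H] | [_ H]]]; [left | right]; exists l; auto.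
Qed.

Lemma ancestor_same_length {A} (s t : list A) : ancestor s t -> length s = length t -> s = t.
Proof. intros [p ->] H. rewrite length_app in H. destruct p; simpl in *; auto; lia. Qed.

Lemma ancestor_cons_inv {A} (s t : list A) x : ancestor s (x :: t) -> s = x :: t \/ ancestor s t.
Proof. intros [[|y p] H]; simpl in H; auto. right; injection H as _ H; exists p; auto. Qed.

Lemma ancestor_of_siblings {A} (s a b t : list A) l1 l2 :
  ancestor s a -> ancestor s b -> ancestor (l1 :: t) a -> ancestor (l2 :: t) b -> l1 <> l2 ->
  ancestor s t.
Proof.
  intros Ha Hb H1 H2 Hne.
  assert (Hnot : ~ ancestor (l1 :: t) b).
  { intros H. destruct (ancestor_total _ _ _ H H2) as [E | E];
      apply ancestor_same_length in E; try reflexivity; injection E; auto. }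
  destruct (ancestor_total _ _ _ Ha H1) as [H | H].
  - destruct (ancestor_cons_inv _ _ _ H) as [-> | Ht]; [contradiction | exact Ht].
  - exfalso. apply Hnot. eapply ancestor_trans; eauto.
Qed.

Lemma adjT_nodes u v : adjT u v ->
  fst u = fst v \/ (exists L, fst u = L :: fst v) \/ (exists L, fst v = L :: fst u).
Proof.
  unfold adjT, step; intros [_ [H | H]].
  - destruct (fst u) as [|L s] eqn:E; [contradiction|].
    destruct H as [_ [[Hv _] | [_ [Hv _]]]]; [left | right; left; exists L]; congruence.
  - destruct (fst v) as [|L s] eqn:E; [contradiction|].
    destruct H as [_ [[Hu _] | [_ [Hu _]]]]; [left | right; right; exists L]; congruence.
Qed.

Lemma adjT_valid u v : adjT u v -> valid u /\ valid v.
Proof.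
  unfold adjT, step, valid; intros [_ [H | H]].
  - destruct (fst u) eqn:E; [contradiction|].
    destruct H as [Hu [[Hv [Hlt _]] | [Hv _]]]; split; auto. rewrite Hv; exact Hlt.
  - destruct (fst v) eqn:E; [contradiction|].
    destruct H as [Hv [[Hu [Hlt _]] | [Hu _]]]; split; auto. rewrite Hu; exact Hlt.
Qed.

Lemma walk_valid x l y : walk Gtree x l y -> forall z, In z (x :: l ++ [y]) -> valid z.
Proof.
  revert x; induction l as [|w l IH]; intros x Hw z Hz; simpl in *.
  - destruct (adjT_valid _ _ Hw). intuition (subst; auto).
  - destruct Hw as [Hxw Hw]. destruct Hz as [<- | Hz].
    + exact (proj1 (adjT_valid _ _ Hxw)).
    + apply (IH w Hw). simpl; auto.
Qed.

Lemma walk_common_ancestor x l y : walk Gtree x l y ->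
  exists z, In z (x :: l ++ [y]) /\ ancestor (fst z) (fst x) /\ ancestor (fst z) (fst y).
Proof.
  revert x; induction l as [|w l IH]; intros x Hw; simpl in *.
  - destruct (adjT_nodes _ _ Hw) as [E | [[L E] | [L E]]].
    + exists x. rewrite E. auto using ancestor_refl.
    + exists y. rewrite E. auto using ancestor_refl, ancestor_parent.
    + exists x. rewrite E. auto using ancestor_refl, ancestor_parent.
  - destruct Hw as [Hxw Hw]. destruct (IH w Hw) as [z [Hz [Hzw Hzy]]].
    destruct (adjT_nodes _ _ Hxw) as [E | [[L E] | [L E]]].
    + exists z. rewrite E. simpl in Hz; auto.
    + exists z. rewrite E. simpl in Hz.
      eauto 6 using ancestor_trans, ancestor_parent.
    + assert (Hxw' : ancestor (fst x) (fst w)) by (rewrite E; apply ancestor_parent).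
      destruct (ancestor_total _ _ _ Hzw Hxw') as [H | H].
      * exists z. simpl in Hz; auto.
      * exists x. eauto 6 using ancestor_refl, ancestor_trans.
Qed.

Definition vertices_at (s : node) : list vtx :=
  match s with [] => [] | L :: _ => map (fun a => (s, a)) (seq 0 (width L)) end.

Fixpoint suffixes {A} (l : list A) : list (list A) :=
  match l with [] => [[]] | _ :: l' => l :: suffixes l' end.

Lemma in_suffixes {A} (s t : list A) : In s (suffixes t) <-> ancestor s t.
Proof.
  revert s; induction t as [|x t IH]; intros s; split.
  - intros [<- | []]. apply ancestor_refl.
  - intros [p Hp]. destruct p, s; try discriminate. left; reflexivity.
  - intros [<- | H]; [apply ancestor_refl|].
    eapply ancestor_trans; [apply IH, H | apply ancestor_parent].
  - intros H. destruct (ancestor_cons_inv _ _ _ H) as [-> | H']; [left | right; apply IH]; auto.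
Qed.

Lemma in_vertices_at u s : In u (vertices_at s) <-> valid u /\ fst u = s.
Proof.
  destruct u as [s' a]; unfold valid; simpl. destruct s as [|L s]; simpl.
  - split; [intros [] | intros [H ->]; exact H].
  - rewrite in_map_iff. setoid_rewrite in_seq. split.
    + intros [a' [E Ha]]. injection E as <- <-. split; [lia | reflexivity].
    + intros [H ->]. exists a; split; [reflexivity | lia].
Qed.

Definition ancestral (t : node) : list vtx := flat_map vertices_at (suffixes t).

Lemma in_ancestral u t : In u (ancestral t) <-> valid u /\ ancestor (fst u) t.
Proof.
  unfold ancestral. rewrite in_flat_map. setoid_rewrite in_vertices_at.
  setoid_rewrite in_suffixes. split.
  - intros [s [Hs [Hv <-]]]. auto.
  - intros [Hv Ha]. exists (fst u). auto.
Qed.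

Lemma escape_to_child x P y : walk Gtree x P y ->
  (forall v, In v (P ++ [y]) -> ~ In v (ancestral (fst x))) ->
  exists l c, In c (P ++ [y]) /\ fst c = l :: fst x /\ ancestor (l :: fst x) (fst y).
Proof.
  intros Hw Hav.
  assert (Hchild : forall c, In c (P ++ [y]) -> adjT x c -> exists l, fst c = l :: fst x).
  { intros c Hc Hxc. destruct (adjT_valid _ _ Hxc) as [_ Hv].
    destruct (adjT_nodes _ _ Hxc) as [E | [[L E] | [L E]]]; eauto;
      exfalso; apply (Hav c Hc), in_ancestral; rewrite E;
      auto using ancestor_refl, ancestor_parent. }
  destruct P as [|c P]; simpl in Hw.
  - destruct (Hchild y (or_introl eq_refl) Hw) as [l E].
    exists l, y. rewrite E. simpl; auto using ancestor_refl.
  - destruct Hw as [Hxc Hw].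
    destruct (Hchild c (or_introl eq_refl) Hxc) as [l E].
    exists l, c. split; [left; reflexivity | split; [exact E|]].
    destruct (walk_common_ancestor _ _ _ Hw) as [z [Hz [Hzc Hzy]]].
    rewrite E in Hzc. destruct (ancestor_cons_inv _ _ _ Hzc) as [<- | Hzx]; [exact Hzy|].
    exfalso. apply (Hav z); [exact Hz|]. apply in_ancestral.
    split; [apply (walk_valid _ _ _ Hw); exact Hz | exact Hzx].
Qed.

Lemma disjoint_family_avoids {A} (Y : list A) (F : nat -> list A) N :
  (forall i j v, N <= i -> N <= j -> i <> j -> In v (F i) -> In v (F j) -> False) ->
  exists k, N <= k /\ forall v, In v (F k) -> ~ In v Y.
Proof.
  intros Hdisj. apply NNPP; intros Hnone.
  assert (Hmeet : forall k, N <= k -> exists v, In v (F k) /\ In v Y).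
  { intros k Hk. apply NNPP; intros Hv. apply Hnone. exists k; split; auto.
    intros v H1 H2; apply Hv; eauto. }
  assert (Hwit : forall n, exists l, NoDup l /\ incl l Y /\ length l = n /\
     forall v, In v l -> exists k, N <= k < N + n /\ In v (F k)).
  { induction n as [|n [l [Hnd [Hincl [Hlen Hl]]]]].
    - exists []. repeat split; [constructor | intros a [] | intros v []].
    - destruct (Hmeet (N + n)) as [v [Hv HvY]]; [lia|].
      exists (v :: l); repeat split.
      + constructor; auto. intros Hin. destruct (Hl v Hin) as [k [Hk Hvk]].
        apply (Hdisj k (N + n) v); auto; lia.
      + intros a [<- | Ha]; auto.
      + simpl; lia.
      + intros a [<- | Ha]; [exists (N + n); split; auto; lia|].
        destruct (Hl a Ha) as [k [Hk Hak]]; exists k; split; auto; lia. }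
  destruct (Hwit (S (length Y))) as [l [Hnd [Hincl [Hlen _]]]].
  pose proof (NoDup_incl_length Hnd Hincl). lia.
Qed.

Section Subdivision.

Variables (K : graph) (b : nat -> vert K) (P : nat -> nat -> list (vert K)).
Hypothesis branch_inj : forall i j, b i = b j -> i = j.
Hypothesis paths_ok : forall i j, i < j ->
  walk K (b i) (P i j) (b j) /\ NoDup (b i :: P i j ++ [b j]) /\
  (forall v k, In v (P i j) -> v <> b k).
Hypothesis paths_disjoint : forall i j i' j' v, i < j -> i' < j' -> (i, j) <> (i', j') ->
  In v (P i j) -> ~ In v (P i' j').

Definition fan (I : list nat) (k : nat) : list (vert K) := b k :: flat_map (fun i => P i k) I.

Lemma in_fan I i k v : In i I -> In v (P i k ++ [b k]) -> In v (fan I k).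
Proof.
  intros Hi Hv. apply in_app_or in Hv. destruct Hv as [Hv | [<- | []]]; [right | left; reflexivity].
  apply in_flat_map; eauto.
Qed.

Lemma fans_disjoint I j k v : (forall i, In i I -> i < j /\ i < k) -> j <> k ->
  In v (fan I j) -> In v (fan I k) -> False.
Proof.
  intros HI Hjk [<- | Hj] [Ek | Hk].
  - exact (Hjk (branch_inj _ _ (eq_sym Ek))).
  - apply in_flat_map in Hk as [i' [Hi' Hk]].
    exact (proj2 (proj2 (paths_ok i' k (proj2 (HI i' Hi')))) _ j Hk eq_refl).
  - apply in_flat_map in Hj as [i [Hi Hj]]. subst v.
    exact (proj2 (proj2 (paths_ok i j (proj1 (HI i Hi)))) _ k Hj eq_refl).
  - apply in_flat_map in Hj as [i [Hi Hj]]. apply in_flat_map in Hk as [i' [Hi' Hk]].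
    apply (paths_disjoint i j i' k v (proj1 (HI i Hi)) (proj2 (HI i' Hi')));
      [intros E; injection E; auto | exact Hj | exact Hk].
Qed.

Lemma fresh_fan I (Y : list (vert K)) :
  exists k, (forall i, In i I -> i < k) /\ forall v, In v (fan I k) -> ~ In v Y.
Proof.
  assert (Hmax : forall i, In i I -> i <= list_max I).
  { intros i Hi. apply (proj1 (Forall_forall _ _) (proj1 (list_max_le I _) (le_n _))); exact Hi. }
  destruct (disjoint_family_avoids Y (fan I) (S (list_max I))) as [k [Hk Hav]].
  - intros i j v Hi Hj Hij. apply fans_disjoint; auto.
    intros i' Hi'. pose proof (Hmax i' Hi'). lia.
  - exists k. split; auto. intros i Hi. pose proof (Hmax i Hi). lia.
Qed.

End Subdivision.

(* Let t be the node of b 0.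
   Some path from b 0 to a b j avoids the finitely many vertices at ancestors
   of t, so b j lies below a child l0 :: t. Some path from b 0 to a later
   b k, together with the path from b j to b k, avoids the vertices at
   ancestors of l0 :: t; then b k lies below another child l :: t, and the
   path from b j to b k must meet an ancestor of t: a contradiction. *)
Lemma no_TK : ~ has_TK_aleph0 Gtree.
Proof.
  intros [b [P [Hinj [Hpaths Hdisj]]]].
  set (t := fst (b 0)).
  destruct (fresh_fan _ b P Hinj Hpaths Hdisj [0] (ancestral t)) as [j [Hj Havj]].
  assert (H0j : 0 < j) by (apply Hj; left; reflexivity).
  destruct (escape_to_child _ _ _ (proj1 (Hpaths 0 j H0j))) as [l0 [_ [_ [_ Hl0]]]].
  { intros v Hv. apply Havj. apply in_fan with (i := 0); [left|]; auto. }
  destruct (fresh_fan _ b P Hinj Hpaths Hdisj [0; j] (ancestral (l0 :: t)))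
    as [k [Hk Havk]].
  assert (H0k : 0 < k) by (apply Hk; left; reflexivity).
  assert (Hjk : j < k) by (apply Hk; right; left; reflexivity).
  assert (Hanc : forall v, In v (ancestral t) -> In v (ancestral (l0 :: t))).
  { intros v Hv. apply in_ancestral in Hv as [Hv Ha]. apply in_ancestral.
    split; [exact Hv | eapply ancestor_trans; [exact Ha | apply ancestor_parent]]. }
  destruct (escape_to_child _ _ _ (proj1 (Hpaths 0 k H0k))) as [l [c [Hc [Ec Hl]]]].
  { intros v Hv Hv'. apply (Havk v); [apply in_fan with (i := 0); [left|]; auto | apply Hanc; exact Hv']. }
  assert (Hne : l0 <> l).
  { intros <-. apply (Havk c); [apply in_fan with (i := 0); [left|]; auto|].
    apply in_ancestral. rewrite Ec. split; [|apply ancestor_refl].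
    apply (walk_valid _ _ _ (proj1 (Hpaths 0 k H0k))). right; exact Hc. }
  destruct (walk_common_ancestor _ _ _ (proj1 (Hpaths j k Hjk))) as [z [Hz [Hzj Hzk]]].
  assert (Hzt : In z (ancestral t)).
  { apply in_ancestral. split.
    - exact (walk_valid _ _ _ (proj1 (Hpaths j k Hjk)) z Hz).
    - exact (ancestor_of_siblings _ _ _ _ _ _ Hzj Hzk Hl0 Hl Hne). }
  destruct Hz as [<- | Hz].
  - apply (Havj (b j)); [left; reflexivity | exact Hzt].
  - apply (Havk z); [apply in_fan with (i := j); [right; left|] | apply Hanc]; auto.
Qed.

Section LayeredEmbedding.

Variables (H : graph) (h : vert H -> nat) (lev : nat -> list (vert H)).
Hypothesis h_step : forall x y, adj H x y -> h y <= S (h x).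
Hypothesis lev_complete : forall x, In x (lev (h x)).

Definition holds (Q : Prop) : bool := if excluded_middle_informative Q then true else false.

Lemma holds_spec Q : holds Q = true <-> Q.
Proof. unfold holds. destruct (excluded_middle_informative Q); split; auto; discriminate. Qed.

Definition adjacent_entries (l1 l2 : list (vert H)) (p : nat * nat) : Prop :=
  exists x y, nth_error l1 (fst p) = Some x /\ nth_error l2 (snd p) = Some y /\ adj H x y.

Definition edges_between (l1 l2 : list (vert H)) : list (nat * nat) :=
  filter (fun p => holds (adjacent_entries l1 l2 p))
    (list_prod (seq 0 (length l1)) (seq 0 (length l2))).

Lemma in_edges_between l1 l2 i j x y :
  nth_error l1 i = Some x -> nth_error l2 j = Some y ->
  (In (i, j) (edges_between l1 l2) <-> adj H x y).
Proof.
  intros Hx Hy. unfold edges_between. rewrite filter_In, in_prod_iff, !in_seq, holds_spec.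
  assert (Hi : i < length l1) by (apply nth_error_Some; congruence).
  assert (Hj : j < length l2) by (apply nth_error_Some; congruence).
  unfold adjacent_entries; simpl. split.
  - intros [_ [x' [y' [Hx' [Hy' Hxy]]]]]. congruence.
  - intros Hxy. split; [lia|]. exists x, y; auto.
Qed.

Definition encode_level (n : nat) : layer :=
  Layer (length (lev n)) (edges_between (lev n) (lev n))
    (match n with 0 => [] | S m => edges_between (lev (S m)) (lev m) end).

Fixpoint tower (n : nat) : node :=
  encode_level n :: match n with 0 => [] | S m => tower m end.

Lemma tower_unfold n : tower n = encode_level n :: match n with 0 => [] | S m => tower m end.
Proof. destruct n; reflexivity. Qed.

Lemma tower_injective : injective tower.
Proof.
  assert (Hlen : forall n, length (tower n) = S n) by (induction n; simpl; auto).
  intros n m E. apply (f_equal (@length _)) in E. rewrite !Hlen in E. lia.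
Qed.

Definition slot (x : vert H) : nat :=
  proj1_sig (constructive_indefinite_description _ (In_nth_error _ _ (lev_complete x))).

Lemma slot_spec x : nth_error (lev (h x)) (slot x) = Some x.
Proof. unfold slot. destruct (constructive_indefinite_description _ _); auto. Qed.

Lemma slot_lt x : slot x < length (lev (h x)).
Proof. apply nth_error_Some. rewrite slot_spec. discriminate. Qed.

Definition embed (x : vert H) : vtx := (tower (h x), slot x).

Lemma embed_injective : injective embed.
Proof.
  intros x y E. injection E as Eh Es. apply tower_injective in Eh.
  pose proof (slot_spec x) as Hx. rewrite Eh, Es, slot_spec in Hx. congruence.
Qed.

Lemma embed_valid x : valid (embed x).
Proof. unfold valid, embed; simpl. rewrite tower_unfold. exact (slot_lt x). Qed.

Lemma step_embed_adj x y : step (embed x) (embed y) -> adj H x y.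
Proof.
  unfold step, embed; simpl. rewrite tower_unfold; simpl.
  intros [_ [[E [_ Hin]] | [_ [E Hin]]]].
  - rewrite <- tower_unfold in E. apply tower_injective in E.
    assert (Hy : nth_error (lev (h x)) (slot y) = Some y) by (rewrite <- E; apply slot_spec).
    exact (proj1 (in_edges_between _ _ _ _ _ _ (slot_spec x) Hy) Hin).
  - destruct (h x) as [|m] eqn:Ex.
    + rewrite tower_unfold in E. discriminate.
    + apply tower_injective in E.
      assert (Hy : nth_error (lev m) (slot y) = Some y) by (rewrite <- E; apply slot_spec).
      rewrite <- Ex in Hin.
      exact (proj1 (in_edges_between _ _ _ _ _ _ (slot_spec x) Hy) Hin).
Qed.

Lemma adj_step_embed x y : adj H x y -> h x = h y \/ h x = S (h y) -> step (embed x) (embed y).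
Proof.
  intros Hxy Hh. unfold step, embed; simpl. rewrite tower_unfold; simpl.
  split; [exact (slot_lt x)|]. destruct Hh as [Eh | Eh].
  - left. rewrite <- tower_unfold, Eh. split; [reflexivity | split; [exact (slot_lt y)|]].
    assert (Hy : nth_error (lev (h x)) (slot y) = Some y) by (rewrite Eh; apply slot_spec).
    rewrite <- Eh. exact (proj2 (in_edges_between _ _ _ _ _ _ (slot_spec x) Hy) Hxy).
  - right. split; [exact (embed_valid y)|]. rewrite Eh. split; [reflexivity|].
    assert (Hy : nth_error (lev (h y)) (slot y) = Some y) by apply slot_spec.
    simpl. rewrite <- Eh. exact (proj2 (in_edges_between _ _ _ _ _ _ (slot_spec x) Hy) Hxy).
Qed.

Lemma layered_induced : induced_subgraph_of H Gtree.
Proof.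
  exists embed. split; [exact embed_injective|]. intros x y. split.
  - intros Hxy. split.
    + intros E. apply embed_injective in E. subst. exact (adj_irrefl H y Hxy).
    + pose proof (h_step x y Hxy). pose proof (h_step y x (adj_sym H x y Hxy)).
      assert (Hh : h x = h y \/ h x = S (h y) \/ h y = S (h x)) by lia.
      destruct Hh as [Eh | [Eh | Eh]].
      * left. apply adj_step_embed; auto.
      * left. apply adj_step_embed; auto.
      * right. apply adj_step_embed; [apply adj_sym|]; auto.
  - intros [_ [Hs | Hs]]; [|apply adj_sym]; apply step_embed_adj; exact Hs.
Qed.

End LayeredEmbedding.

Definition bounded {A} (Q : A -> Prop) : Prop := exists l : list A, forall x, Q x -> In x l.

Lemma bounded_bind {A B} (Q : A -> Prop) (R : A -> B -> Prop) :
  bounded Q -> (forall a, bounded (R a)) -> bounded (fun b => exists a, Q a /\ R a b).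
Proof.
  intros [la Hla] HR.
  assert (Hlist : forall la', exists lb, forall a b, In a la' -> R a b -> In b lb).
  { induction la' as [|a la' [lb Hlb]]; [exists []; intros a b []|].
    destruct (HR a) as [l Hl]. exists (l ++ lb).
    intros a' b [<- | Ha'] Hab; apply in_or_app; eauto. }
  destruct (Hlist la) as [lb Hlb]. exists lb. intros b [a [Ha Hab]]. eauto.
Qed.

Lemma bounded_small_codes {A} (f : A -> nat) : injective f -> forall n, bounded (fun y => f y < n).
Proof.
  intros Hf n. induction n as [|n [l Hl]]; [exists []; intros; lia|].
  destruct (classic (exists y0, f y0 = n)) as [[y0 Hy0] | Hno].
  - exists (y0 :: l). intros y Hy. destruct (Nat.eq_dec (f y) n) as [E | E].
    + left; apply Hf; congruence.
    + right; apply Hl; lia.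
  - exists l. intros y Hy. apply Hl.
    destruct (Nat.eq_dec (f y) n) as [E | E]; [exfalso; eauto | lia].
Qed.

Inductive reach (K : graph) : nat -> vert K -> vert K -> Prop :=
| reach_refl y : reach K 0 y y
| reach_step r y z x : reach K r y z -> adj K z x -> reach K (S r) y x.

Lemma bounded_ball (K : graph) : locally_finite K ->
  forall r y, bounded (fun x => exists r', r' <= r /\ reach K r' y x).
Proof.
  intros Hlf. induction r as [|r IH]; intros y.
  - exists [y]. intros x [r' [Hr Hx]]. inversion Hx; subst; [left; reflexivity | lia].
  - destruct (bounded_bind _ (adj K) (IH y) Hlf) as [l Hl].
    exists (y :: l). intros x [r' [Hr Hx]]. inversion Hx as [| r'' y' z x' Hz Hzx]; subst.
    + left; reflexivity.
    + right. apply Hl. exists z. split; [exists r''; split; [lia|]|]; assumption.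
Qed.

(* Every locally finite countable graph admits a layering: with f an
   injective coding of its vertices, take h x = min over y of f y + d(y, x). *)
Section Layering.

Variables (K : graph) (f : vert K -> nat).
Hypothesis f_injective : injective f.
Hypothesis K_locally_finite : locally_finite K.

Definition covered (n : nat) (x : vert K) : Prop := exists y r, f y + r <= n /\ reach K r y x.

Lemma covered_least x : exists n, covered n x /\ forall m, covered m x -> n <= m.
Proof.
  destruct (dec_inh_nat_subset_has_unique_least_element (fun n => covered n x))
    as [n [[Hn Hmin] _]].
  - intros n; apply classic.
  - exists (f x), x, 0. split; [lia | constructor].
  - exists n; split; auto.
Qed.

Definition height (x : vert K) : nat :=
  proj1_sig (constructive_indefinite_description _ (covered_least x)).

Lemma height_spec x : covered (height x) x /\ forall m, covered m x -> height x <= m.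
Proof. unfold height. destruct (constructive_indefinite_description _ _); auto. Qed.

Lemma height_step x y : adj K x y -> height y <= S (height x).
Proof.
  intros Hxy. apply (proj2 (height_spec y)).
  destruct (proj1 (height_spec x)) as [z [r [Hr Hz]]].
  exists z, (S r). split; [lia | econstructor; eauto].
Qed.

Lemma covered_bounded n : bounded (covered n).
Proof.
  destruct (bounded_bind (fun y => f y < S n) (fun y x => exists r, r <= n /\ reach K r y x)
              (bounded_small_codes f f_injective (S n))
              (bounded_ball K K_locally_finite n)) as [l Hl].
  exists l. intros x [y [r [Hr Hx]]]. apply Hl. exists y. split; [lia | exists r; split; [lia | exact Hx]].
Qed.

Definition level (n : nat) : list (vert K) :=
  proj1_sig (constructive_indefinite_description _ (covered_bounded n)).

Lemma level_complete x : In x (level (height x)).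
Proof.
  unfold level. destruct (constructive_indefinite_description _ _) as [l Hl]; simpl.
  apply Hl, height_spec.
Qed.

End Layering.

Lemma universal (K : graph) : locally_finite K -> induced_subgraph_of K Gtree.
Proof.
  intros Hlf. destruct (vert_countable K) as [f Hf].
  exact (layered_induced K (height K f) (level K f Hf Hlf)
           (height_step K f) (level_complete K f Hf Hlf)).
Qed.

Theorem mainTheorem19 :
  exists G : graph,
    (forall H : graph, locally_finite H -> induced_subgraph_of H G) /\
    ~ has_TK_aleph0 G.
Proof.
  exists Gtree. split; [exact universal | exact no_TK].
Qed.
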